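(* Let $G$ be a circle and let $x_1,\dots,x_n,y_1,\dots,y_n\in G$ be arbitrary (not necessarily distinct). Then there exists $i\in\{1,\dots,n\}$ such that $$\sum_{k=1}^n d(x_i,x_k)\le\sum_{k=1}^n d(x_i,y_k).$$
   Context: A circle is a network consisting of a single closed simple curve (e.g. the unit circle $S^1$); $d(x,y)$ denotes the length of the shorter arc between $x$ and $y$. *)

From Stdlib Require Import Reals Lra.
Open Scope R_scope.

(* A circle of (total) length L > 0, parametrised by arc length:
   its points are the reals t with 0 <= t < L (the point at arc-length t
   from a fixed base point). *)
Definition on_circle (L t : R) : Prop := 0 <= t < L.

Definition circ_dist (L x y : R) : R := Rmin (Rabs (x - y)) (L - Rabs (x - y)).

Fixpoint sum_1n (n : nat) (f : nat -> R) : R :=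
  match n with
  | O => 0
  | S m => sum_1n m f + f (S m)
  end.

From Stdlib Require Import Reals Lra Lia List Sorted Classical.
Import ListNotations.
Open Scope R_scope.

(* Write [a] for the antipodal map, so that d(a p, z) = L/2 - d(p, z),
   and put  phi(p) = sum_{z in Z} (2 d(p, z) - L/2)  for the configuration
   Z = {x_1, ..., x_n, a y_1, ..., a y_n}.  Then
   phi(p) = 2 (sum_k d(p, x_k) - sum_k d(p, y_k)) and phi(a p) = - phi(p).
   If the theorem failed, phi would be positive at every x_k.
   Let B be the indicator of {phi > 0}.  Each summand ("tent") of phi is
   piecewise affine with slopes +-2 and kinks at z and a z only, so a discrete
   Stieltjes sum of phi against B around the circle equals
   4 sum_{z in Z} (B z - B (a z)); on the other hand every term of that sum
   is <= 0, and some term is < 0 because B x_1 = 1 <> 0 = B (a x_1).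
   Hence sum_{z in Z} (B z - B (a z)) < 0, whereas each pair (x_k, a y_k)
   contributes (1 - 0) + (B (a y_k) - B y_k) >= 0: a contradiction. *)

Definition lsum {A : Type} (f : A -> R) (l : list A) : R :=
  fold_right (fun a s => f a + s) 0 l.

Lemma lsum_cons {A : Type} (f : A -> R) (a : A) (l : list A) :
  lsum f (a :: l) = f a + lsum f l.
Proof. reflexivity. Qed.

Lemma lsum_app {A : Type} (f : A -> R) (l1 l2 : list A) :
  lsum f (l1 ++ l2) = lsum f l1 + lsum f l2.
Proof.
  induction l1 as [|a l1 IH]; [simpl; ring|].
  rewrite <- app_comm_cons, !lsum_cons, IH. ring.
Qed.

Lemma lsum_ext_in {A : Type} (f g : A -> R) (l : list A) :
  (forall a, In a l -> f a = g a) -> lsum f l = lsum g l.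
Proof.
  induction l as [|a l IH]; intros Hfg; [reflexivity|].
  rewrite !lsum_cons, (Hfg a (or_introl eq_refl)), IH; [reflexivity|].
  intros b Hb. apply Hfg. right. exact Hb.
Qed.

Lemma lsum_scale {A : Type} (c : R) (f : A -> R) (l : list A) :
  lsum (fun a => c * f a) l = c * lsum f l.
Proof. induction l as [|a l IH]; [simpl; ring|]. rewrite !lsum_cons, IH. ring. Qed.

Lemma lsum_nonneg {A : Type} (f : A -> R) (l : list A) :
  (forall a, In a l -> 0 <= f a) -> 0 <= lsum f l.
Proof.
  induction l as [|a l IH]; intros Hf; [simpl; lra|].
  rewrite lsum_cons.
  assert (0 <= f a) by (apply Hf; left; reflexivity).
  assert (0 <= lsum f l) by (apply IH; intros b Hb; apply Hf; right; exact Hb).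
  lra.
Qed.

Lemma lsum_flat_map {A B : Type} (f : B -> R) (g : A -> list B) (l : list A) :
  lsum f (flat_map g l) = lsum (fun a => lsum f (g a)) l.
Proof. induction l as [|a l IH]; simpl; [reflexivity|]. rewrite lsum_app, IH. reflexivity. Qed.

Lemma sum_1n_lsum (n : nat) (f : nat -> R) : sum_1n n f = lsum f (seq 1 n).
Proof.
  induction n as [|n IH]; [reflexivity|].
  rewrite seq_S, lsum_app, <- IH. simpl. ring.
Qed.

(* A path is a list [a :: l]; it starts at [a] and ends at [last l a]. *)

Lemma last_cons_default {A : Type} (b : A) (l : list A) (a : A) :
  last (b :: l) a = last l b.
Proof.
  revert b a; induction l as [|c l IH]; intros b a; [reflexivity|].
  change (last (c :: l) a = last (c :: l) b). rewrite !IH. reflexivity.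
Qed.

Lemma last_app_default {A : Type} (l1 l2 : list A) (a : A) :
  last (l1 ++ l2) a = last l2 (last l1 a).
Proof.
  revert a; induction l1 as [|b l1 IH]; intros a; [reflexivity|].
  rewrite <- app_comm_cons, !last_cons_default. apply IH.
Qed.

Lemma last_In {A : Type} (l : list A) (a : A) : In (last l a) (a :: l).
Proof.
  revert a; induction l as [|b l IH]; intros a; [left; reflexivity|].
  rewrite last_cons_default. right. apply IH.
Qed.

Lemma split_path {A : Type} (m a : A) (l : list A) :
  In m (a :: l) -> exists l1 l2, l = l1 ++ l2 /\ last l1 a = m.
Proof.
  intros [<-|Hm].
  - exists [], l. auto.
  - destruct (in_split _ _ Hm) as [l1 [l2 ->]]. exists (l1 ++ [m]), l2.
    rewrite <- app_assoc. split; [reflexivity|]. apply last_last.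
Qed.

Lemma sorted_cons2 (a b : R) (l : list R) :
  LocallySorted Rlt (a :: b :: l) <-> a < b /\ LocallySorted Rlt (b :: l).
Proof. split; [intros H; inversion H; auto | intros [? ?]; constructor; auto]. Qed.

Lemma sorted_app (a : R) (l1 l2 : list R) :
  LocallySorted Rlt (a :: l1 ++ l2) ->
  LocallySorted Rlt (a :: l1) /\ LocallySorted Rlt (last l1 a :: l2).
Proof.
  revert a; induction l1 as [|b l1 IH]; intros a H; [split; [constructor|exact H]|].
  rewrite last_cons_default. rewrite <- app_comm_cons, sorted_cons2 in H.
  destruct H as [Hab H]. destruct (IH b H) as [H1 H2].
  split; [apply sorted_cons2|]; auto.
Qed.

Lemma sorted_bounds (a : R) (l : list R) :
  LocallySorted Rlt (a :: l) -> forall w, In w (a :: l) -> a <= w <= last l a.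
Proof.
  revert a; induction l as [|b l IH]; intros a H w Hw.
  - destruct Hw as [<-|[]]. simpl. lra.
  - rewrite last_cons_default. apply sorted_cons2 in H. destruct H as [Hab H].
    assert (Hb : b <= last l b) by (apply (IH b H b); left; reflexivity).
    destruct Hw as [<-|Hw]; [lra|]. specialize (IH b H w Hw). lra.
Qed.

Lemma sorted_span (a lo hi : R) (l : list R) :
  LocallySorted Rlt (a :: l) -> In lo (a :: l) -> In hi (a :: l) ->
  (forall w, In w (a :: l) -> lo <= w <= hi) -> a = lo /\ last l a = hi.
Proof.
  intros Hs Hlo Hhi Hw.
  pose proof (sorted_bounds a l Hs) as Hb.
  pose proof (Hb lo Hlo). pose proof (Hb hi Hhi).
  pose proof (Hw a (or_introl eq_refl)). pose proof (Hw _ (last_In l a)). lra.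
Qed.

Fixpoint insert_point (s : R) (l : list R) : list R :=
  match l with
  | [] => [s]
  | a :: l' =>
      if Rlt_dec s a then s :: l
      else if Req_EM_T s a then l else a :: insert_point s l'
  end.

Lemma insert_point_In (s w : R) (l : list R) :
  In w (insert_point s l) <-> w = s \/ In w l.
Proof.
  induction l as [|a l IH]; simpl; [intuition|].
  destruct (Rlt_dec s a); [simpl; intuition|].
  destruct (Req_EM_T s a) as [->|]; simpl; rewrite ?IH; intuition.
Qed.

Lemma insert_point_sorted_after (s a : R) (l : list R) :
  a < s -> LocallySorted Rlt (a :: l) -> LocallySorted Rlt (a :: insert_point s l).
Proof.
  revert a; induction l as [|b l IH]; intros a Has H; simpl.
  - apply sorted_cons2. split; [exact Has | constructor].
  - apply sorted_cons2 in H. destruct H as [Hab H].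
    destruct (Rlt_dec s b); [|destruct (Req_EM_T s b)];
      apply sorted_cons2; split; auto.
    + apply sorted_cons2. auto.
    + apply IH; auto. lra.
Qed.

Lemma insert_point_sorted (s : R) (l : list R) :
  LocallySorted Rlt l -> LocallySorted Rlt (insert_point s l).
Proof.
  destruct l as [|a l]; intros H; simpl; [constructor|].
  destruct (Rlt_dec s a); [apply sorted_cons2; auto|].
  destruct (Req_EM_T s a); [exact H|]. apply insert_point_sorted_after; auto. lra.
Qed.

Lemma breakpoints (L : R) (S : list R) :
  0 < L -> (forall s, In s S -> 0 <= s <= L) ->
  exists t, LocallySorted Rlt (0 :: t) /\ last t 0 = L /\ (forall s, In s S -> In s (0 :: t)).
Proof.
  intros HL HS.
  set (u := fold_right insert_point [0; L] S).
  assert (Hsorted : LocallySorted Rlt u).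
  { unfold u; induction S as [|s S IH]; simpl.
    - apply sorted_cons2. split; [exact HL | constructor].
    - apply insert_point_sorted, IH. intros; apply HS; right; auto. }
  assert (Hin : forall w, In w u <-> w = 0 \/ w = L \/ In w S).
  { intros w; unfold u; clear Hsorted HS; induction S as [|s S IH]; simpl; [intuition|].
    rewrite insert_point_In, IH. intuition. }
  destruct u as [|a t]; [exfalso; apply (proj2 (Hin 0)); auto|].
  assert (Hspan : a = 0 /\ last t a = L).
  { apply sorted_span; [exact Hsorted | apply Hin; auto | apply Hin; auto |].
    intros w Hw. apply Hin in Hw. destruct Hw as [->|[->|Hw]]; [lra|lra|auto]. }
  destruct Hspan as [-> Hlast].
  exists t. split; [exact Hsorted|]. split; [exact Hlast|].
  intros s Hs. apply Hin. auto.
Qed.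

(** * Discrete Stieltjes sums *)

(* Along the path [a = t_0 < t_1 < ... < t_m], the sum of
   slope_j(g) * (B t_{j-1} - B t_j): a discrete analogue of [- \int g' dB]. *)
Fixpoint stieltjes (g B : R -> R) (a : R) (l : list R) : R :=
  match l with
  | [] => 0
  | b :: l' => (g b - g a) / (b - a) * (B a - B b) + stieltjes g B b l'
  end.

Definition linear_on (g : R -> R) (s p q : R) : Prop :=
  forall u v, p <= u <= q -> p <= v <= q -> g v - g u = s * (v - u).

Lemma stieltjes_app (g B : R -> R) (a : R) (l1 l2 : list R) :
  stieltjes g B a (l1 ++ l2) = stieltjes g B a l1 + stieltjes g B (last l1 a) l2.
Proof.
  revert a; induction l1 as [|b l1 IH]; intros a; [simpl; lra|]. cbn [stieltjes app].
  rewrite IH, last_cons_default. lra.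
Qed.

Lemma stieltjes_add (g1 g2 B : R -> R) (a : R) (l : list R) :
  stieltjes (fun p => g1 p + g2 p) B a l = stieltjes g1 B a l + stieltjes g2 B a l.
Proof. revert a; induction l as [|b l IH]; intros a; simpl; [lra|]. rewrite IH. unfold Rdiv. ring. Qed.

Lemma stieltjes_lsum {A : Type} (F : A -> R -> R) (Z : list A) (B : R -> R) (a : R) (l : list R) :
  stieltjes (fun p => lsum (fun z => F z p) Z) B a l = lsum (fun z => stieltjes (F z) B a l) Z.
Proof.
  induction Z as [|z Z IH]; unfold lsum in *; simpl.
  - revert a; induction l as [|b l IHl]; intros a; simpl; [reflexivity|].
    rewrite IHl. unfold Rdiv. ring.
  - rewrite stieltjes_add, IH. reflexivity.
Qed.


(* On a piece where [g] is affine, the sum telescopes. *)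
Lemma stieltjes_linear (g B : R -> R) (s a : R) (l : list R) :
  LocallySorted Rlt (a :: l) -> linear_on g s a (last l a) ->
  stieltjes g B a l = s * (B a - B (last l a)).
Proof.
  revert a; induction l as [|b l IH]; intros a Hs Hg; simpl stieltjes; [simpl; ring|].
  pose proof (sorted_bounds a (b :: l) Hs) as Hb.
  rewrite last_cons_default in Hg, Hb |- *.
  apply sorted_cons2 in Hs. destruct Hs as [Hab Hs].
  assert (Hlb : b <= last l b) by (apply (Hb b); right; left; reflexivity).
  rewrite IH by (auto; intros u v Hu Hv; apply Hg; lra).
  rewrite (Hg a b) by lra. field. lra.
Qed.

Lemma stieltjes_cut (g B : R -> R) (s a m : R) (l : list R) :
  LocallySorted Rlt (a :: l) -> In m (a :: l) -> linear_on g s a m ->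
  exists l', LocallySorted Rlt (m :: l') /\ last l' m = last l a /\
    (forall w, In w (a :: l) -> m <= w -> In w (m :: l')) /\
    stieltjes g B a l = s * (B a - B m) + stieltjes g B m l'.
Proof.
  intros Hs Hm Hg.
  destruct (split_path m a l Hm) as [l1 [l2 [-> Hl1]]].
  destruct (sorted_app a l1 l2 Hs) as [Hs1 Hs2]. rewrite Hl1 in Hs2.
  exists l2. split; [exact Hs2|]. split; [rewrite last_app_default, Hl1; reflexivity|].
  split.
  - intros w Hw Hmw.
    destruct (in_app_or (a :: l1) l2 w Hw) as [Hw1|Hw2]; [|right; exact Hw2].
    pose proof (sorted_bounds a l1 Hs1 w Hw1). left. rewrite Hl1 in *. lra.
  - rewrite stieltjes_app, Hl1, stieltjes_linear with (s := s); rewrite ?Hl1; auto.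
Qed.

Lemma stieltjes_three_pieces (g B : R -> R) (s1 s2 s3 a m1 m2 : R) (l : list R) :
  LocallySorted Rlt (a :: l) -> In m1 (a :: l) -> In m2 (a :: l) -> m1 <= m2 ->
  linear_on g s1 a m1 -> linear_on g s2 m1 m2 -> linear_on g s3 m2 (last l a) ->
  stieltjes g B a l =
    s1 * (B a - B m1) + s2 * (B m1 - B m2) + s3 * (B m2 - B (last l a)).
Proof.
  intros Hs Hm1 Hm2 Hle Hg1 Hg2 Hg3.
  destruct (stieltjes_cut g B s1 a m1 l Hs Hm1 Hg1) as [l' [Hs' [Hl' [Hin' ->]]]].
  destruct (stieltjes_cut g B s2 m1 m2 l' Hs' (Hin' m2 Hm2 Hle) Hg2)
    as [l'' [Hs'' [Hl'' [_ ->]]]].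
  rewrite <- Hl', <- Hl'' in *.
  rewrite stieltjes_linear with (s := s3) by auto. ring.
Qed.

Definition pos_ind (phi : R -> R) (p : R) : R := if Rlt_dec 0 (phi p) then 1 else 0.

(* Each term of [stieltjes phi (pos_ind phi)] is nonpositive, and it vanishes
   only if the indicator does not jump: the slope of [phi] has the sign of the
   jump of its positivity indicator. *)
Lemma pos_ind_step (phi : R -> R) (a b : R) : a < b ->
  let term := (phi b - phi a) / (b - a) * (pos_ind phi a - pos_ind phi b) in
  term <= 0 /\ (term = 0 -> pos_ind phi a = pos_ind phi b).
Proof.
  intros Hab term. unfold term, pos_ind.
  destruct (Rlt_dec 0 (phi a)), (Rlt_dec 0 (phi b)); try (split; [lra | auto]).
  - assert (Hsl : (phi b - phi a) / (b - a) < 0) by (apply Rdiv_neg_pos; lra).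
    split; [lra|]. intros. lra.
  - assert (Hsl : 0 < (phi b - phi a) / (b - a)) by (apply Rdiv_lt_0_compat; lra).
    split; [lra|]. intros. lra.
Qed.

Lemma stieltjes_pos_ind_nonpos (phi : R -> R) (a : R) (l : list R) :
  LocallySorted Rlt (a :: l) -> stieltjes phi (pos_ind phi) a l <= 0.
Proof.
  revert a; induction l as [|b l IH]; intros a Hs; simpl; [lra|].
  apply sorted_cons2 in Hs. destruct Hs as [Hab Hs].
  destruct (pos_ind_step phi a b Hab). specialize (IH b Hs). lra.
Qed.

Lemma stieltjes_pos_ind_zero (phi : R -> R) (a : R) (l : list R) :
  LocallySorted Rlt (a :: l) -> stieltjes phi (pos_ind phi) a l = 0 ->
  forall p, In p (a :: l) -> pos_ind phi p = pos_ind phi a.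
Proof.
  revert a; induction l as [|b l IH]; intros a Hs H0 p Hp.
  - destruct Hp as [<-|[]]. reflexivity.
  - simpl in H0. apply sorted_cons2 in Hs. destruct Hs as [Hab Hs].
    destruct (pos_ind_step phi a b Hab) as [Hle Hjump].
    pose proof (stieltjes_pos_ind_nonpos phi b l Hs).
    assert (Hab' : pos_ind phi a = pos_ind phi b) by (apply Hjump; lra).
    destruct Hp as [<-|Hp]; [reflexivity|].
    rewrite Hab'. apply IH; [exact Hs | lra | exact Hp].
Qed.

(** * Geometry of the circle *)

Definition antipode (L p : R) : R := if Rlt_dec p (L / 2) then p + L / 2 else p - L / 2.

Ltac circle_cases :=
  unfold circ_dist, antipode, Rmin, Rabs in *;
  repeat match goal with
  | |- context [Rcase_abs ?a] => destruct (Rcase_abs a)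
  | |- context [Rle_dec ?a ?b] => destruct (Rle_dec a b)
  | |- context [Rlt_dec ?a ?b] => destruct (Rlt_dec a b)
  end; lra.

Lemma antipode_on_circle (L p : R) : 0 < L -> 0 <= p < L -> 0 <= antipode L p < L.
Proof. intros; circle_cases. Qed.

Lemma circ_dist_antipode_l (L p z : R) : 0 < L -> 0 <= p < L -> 0 <= z < L ->
  circ_dist L (antipode L p) z = L / 2 - circ_dist L p z.
Proof. intros; circle_cases. Qed.

Lemma circ_dist_antipode_r (L p z : R) : 0 < L -> 0 <= p < L -> 0 <= z < L ->
  circ_dist L p (antipode L z) = L / 2 - circ_dist L p z.
Proof. intros; circle_cases. Qed.

(* The parameters [0] and [L] describe the same point. *)
Lemma circ_dist_0_L (L z : R) : 0 < L -> 0 <= z < L -> circ_dist L 0 z = circ_dist L L z.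
Proof. intros; circle_cases. Qed.

(* The tent function of [z]: [2 d(p, z) - L/2], which runs from [-L/2] at [z]
   to [L/2] at the antipode of [z] with slopes [+-2]. *)
Definition tent (L z p : R) : R := 2 * circ_dist L p z - L / 2.

Lemma tent_pieces_low (L z : R) : 0 < L -> 0 <= z < L / 2 ->
  linear_on (tent L z) (-2) 0 z /\ linear_on (tent L z) 2 z (z + L / 2) /\
  linear_on (tent L z) (-2) (z + L / 2) L.
Proof. intros; unfold linear_on, tent; repeat split; intros; circle_cases. Qed.

Lemma tent_pieces_high (L z : R) : 0 < L -> L / 2 <= z < L ->
  linear_on (tent L z) 2 0 (z - L / 2) /\ linear_on (tent L z) (-2) (z - L / 2) z /\
  linear_on (tent L z) 2 z L.
Proof. intros; unfold linear_on, tent; repeat split; intros; circle_cases. Qed.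

Lemma stieltjes_tent (L z : R) (B : R -> R) (t : list R) :
  0 < L -> 0 <= z < L -> LocallySorted Rlt (0 :: t) -> last t 0 = L ->
  In z (0 :: t) -> In (antipode L z) (0 :: t) -> B 0 = B L ->
  stieltjes (tent L z) B 0 t = 4 * (B z - B (antipode L z)).
Proof.
  intros HL Hz Hs Hlast Hin Hin' HB.
  destruct (Rlt_dec z (L / 2)) as [Hlow|Hhigh].
  - assert (Ha : antipode L z = z + L / 2) by circle_cases. rewrite Ha in Hin' |- *.
    destruct (tent_pieces_low L z HL (conj (proj1 Hz) Hlow)) as [H1 [H2 H3]].
    rewrite (stieltjes_three_pieces _ B (-2) 2 (-2) 0 z (z + L / 2) t); rewrite ?Hlast;
      auto; lra.
  - assert (Ha : antipode L z = z - L / 2) by circle_cases. rewrite Ha in Hin' |- *.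
    destruct (tent_pieces_high L z HL (conj (Rnot_lt_le _ _ Hhigh) (proj2 Hz)))
      as [H1 [H2 H3]].
    rewrite (stieltjes_three_pieces _ B 2 (-2) 2 0 (z - L / 2) z t); rewrite ?Hlast;
      auto; lra.
Qed.

(** * The potential of a finite configuration *)

Definition potential (L : R) (Z : list R) (p : R) : R := lsum (fun z => tent L z p) Z.

Section Potential.
Variables (L : R) (Z : list R).
Hypothesis HL : 0 < L.
Hypothesis HZ : forall z, In z Z -> 0 <= z < L.

Lemma potential_antipode (p : R) : 0 <= p < L ->
  potential L Z (antipode L p) = - potential L Z p.
Proof.
  intros Hp. unfold potential, lsum. induction Z as [|z Z' IH]; simpl; [ring|].
  rewrite IH by (intros; apply HZ; right; auto).
  unfold tent. rewrite circ_dist_antipode_l by (auto; apply HZ; left; reflexivity). ring.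
Qed.

Lemma potential_0_L : potential L Z 0 = potential L Z L.
Proof.
  unfold potential, lsum. induction Z as [|z Z' IH]; simpl; [reflexivity|].
  rewrite IH by (intros; apply HZ; right; auto).
  unfold tent. rewrite circ_dist_0_L by (auto; apply HZ; left; reflexivity). reflexivity.
Qed.

(* Summing [stieltjes_tent] over [Z] computes [stieltjes] of the potential
   against its own positivity indicator, which is negative by
   [stieltjes_pos_ind_zero]. *)
Lemma potential_imbalance (p : R) : In p Z -> potential L Z p <> 0 ->
  lsum (fun z => pos_ind (potential L Z) z - pos_ind (potential L Z) (antipode L z)) Z < 0.
Proof.
  intros Hp Hp0.
  set (B := pos_ind (potential L Z)).
  destruct (breakpoints L (Z ++ map (antipode L) Z)) as [t [Hs [Hlast Hin]]];
    [exact HL| |].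
  { intros s Hs. apply in_app_or in Hs. destruct Hs as [Hs|Hs].
    - pose proof (HZ s Hs). lra.
    - apply in_map_iff in Hs. destruct Hs as [z [<- Hz]].
      pose proof (antipode_on_circle L z HL (HZ z Hz)). lra. }
  assert (HinZ : forall z, In z Z -> In z (0 :: t) /\ In (antipode L z) (0 :: t)).
  { intros z Hz. split; apply Hin, in_or_app; [left | right; apply in_map]; exact Hz. }
  assert (Hsum : stieltjes (potential L Z) B 0 t =
                 4 * lsum (fun z => B z - B (antipode L z)) Z).
  { unfold potential at 1. rewrite stieltjes_lsum, <- lsum_scale.
    apply lsum_ext_in. intros z Hz. apply stieltjes_tent; try apply HinZ; auto.
    unfold B, pos_ind. rewrite potential_0_L. reflexivity. }
  assert (Hjump : B p <> B (antipode L p)).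
  { unfold B, pos_ind. rewrite potential_antipode by auto.
    destruct (Rlt_dec 0 (potential L Z p)), (Rlt_dec 0 (- potential L Z p)); lra. }
  assert (Hneg : stieltjes (potential L Z) B 0 t <> 0).
  { intros H0. apply Hjump.
    pose proof (stieltjes_pos_ind_zero _ 0 t Hs H0) as Hconst. unfold B.
    rewrite (Hconst p), (Hconst (antipode L p)); auto; apply HinZ; exact Hp. }
  pose proof (stieltjes_pos_ind_nonpos (potential L Z) 0 t Hs). unfold B in *. lra.
Qed.

End Potential.

Definition pair_config (L : R) (x y : nat -> R) (s : list nat) : list R :=
  flat_map (fun k => [x k; antipode L (y k)]) s.

Lemma pair_config_on_circle (L : R) (x y : nat -> R) (s : list nat) :
  0 < L -> (forall k, In k s -> 0 <= x k < L /\ 0 <= y k < L) ->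
  forall z, In z (pair_config L x y s) -> 0 <= z < L.
Proof.
  intros HL Hxy z Hz. apply in_flat_map in Hz.
  destruct Hz as [k [Hk [<-|[<-|[]]]]]; destruct (Hxy k Hk); auto.
  apply antipode_on_circle; auto.
Qed.

Lemma potential_pair_config (L : R) (x y : nat -> R) (s : list nat) (p : R) :
  0 < L -> 0 <= p < L -> (forall k, In k s -> 0 <= y k < L) ->
  potential L (pair_config L x y s) p =
    2 * (lsum (fun k => circ_dist L p (x k)) s - lsum (fun k => circ_dist L p (y k)) s).
Proof.
  intros HL Hp Hy. unfold potential, pair_config. rewrite lsum_flat_map.
  induction s as [|k s IH]; [simpl; ring|].
  rewrite !lsum_cons, IH by (intros; apply Hy; right; auto). simpl.
  unfold tent. rewrite circ_dist_antipode_r by (auto; apply Hy; left; reflexivity). ring.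
Qed.

Lemma pair_config_balance (L : R) (x y : nat -> R) (s : list nat) :
  0 < L -> (forall k, In k s -> 0 <= x k < L /\ 0 <= y k < L) ->
  (forall k, In k s -> 0 < potential L (pair_config L x y s) (x k)) ->
  let phi := potential L (pair_config L x y s) in
  0 <= lsum (fun z => pos_ind phi z - pos_ind phi (antipode L z)) (pair_config L x y s).
Proof.
  intros HL Hxy Hpos phi.
  unfold pair_config at 1. rewrite lsum_flat_map. apply lsum_nonneg.
  intros k Hk. pose proof (Hpos k Hk) as Hpk. destruct (Hxy k Hk) as [Hxk Hyk].
  unfold lsum, phi, pos_ind. simpl.
  rewrite potential_antipode by (auto; apply pair_config_on_circle; auto).
  repeat destruct Rlt_dec; lra.
Qed.

Theorem theorem3 (L : R) (HL : 0 < L) (n : nat) (x y : nat -> R)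
  (Hx : forall k, (1 <= k <= n)%nat -> on_circle L (x k))
  (Hy : forall k, (1 <= k <= n)%nat -> on_circle L (y k)) :
  (1 <= n)%nat ->
  exists i, (1 <= i <= n)%nat /\
    sum_1n n (fun k => circ_dist L (x i) (x k))
    <= sum_1n n (fun k => circ_dist L (x i) (y k)).
Proof.
  intros Hn. apply NNPP. intros Hno.
  set (s := seq 1 n). set (Z := pair_config L x y s).
  assert (Hxy : forall k, In k s -> 0 <= x k < L /\ 0 <= y k < L).
  { intros k Hk. apply in_seq in Hk. split; [apply Hx | apply Hy]; lia. }
  assert (HZ := pair_config_on_circle L x y s HL Hxy).
  (* Were the theorem false, the potential would be positive at every [x_k]. *)
  assert (Hpos : forall k, In k s -> 0 < potential L Z (x k)).
  { intros k Hk.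
    assert (Hk' : (1 <= k <= n)%nat) by (apply in_seq in Hk; lia).
    assert (Hfar : ~ sum_1n n (fun j => circ_dist L (x k) (x j))
                     <= sum_1n n (fun j => circ_dist L (x k) (y j)))
      by (intros Hle; apply Hno; exists k; auto).
    unfold Z. rewrite potential_pair_config by firstorder.
    unfold s. rewrite <- !sum_1n_lsum. lra. }
  assert (H1 : In 1%nat s) by (apply in_seq; lia).
  assert (Hx1 : In (x 1%nat) Z)
    by (apply in_flat_map; exists 1%nat; split; [exact H1 | left; reflexivity]).
  pose proof (potential_imbalance L Z HL HZ (x 1%nat) Hx1 (Rgt_not_eq _ _ (Hpos 1%nat H1)))
    as Himb.
  pose proof (pair_config_balance L x y s HL Hxy Hpos) as Hbal.
  cbv zeta in Hbal. fold Z in Hbal. lra.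
Qed.
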